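(* Let $(A,\cdot,[\,,\,],\varepsilon)$ be an $F$-manifold color algebra and let $\mathfrak B$ be a nondegenerate symmetric bilinear form on $A$ satisfying $\mathfrak B(x\cdot y,z)=\mathfrak B(x,y\cdot z)$ and $\mathfrak B([x,y],z)=\mathfrak B(x,[y,z])$ for all homogeneous $x,y,z\in A$. Then $(A,\cdot,[\,,\,],\varepsilon)$ is a coherence $F$-manifold color algebra, i.e. for all homogeneous $x,y,z,w\in A$: $$P_{x\cdot y}(z,w)=\varepsilon(x,y+z)P_y(z,x\cdot w)+\varepsilon(y,z)P_x(z,y\cdot w),$$ $$P_x(y,z)\cdot w=-\varepsilon(x,y+z)T(y,z)(x\cdot w)+x\cdot T(y,z)(w),$$ where $T(y,z)(w)=-\varepsilon(y,z)[z,y\cdot w]-[y,z\cdot w]+[y\cdot z,w]$.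
   Context: $G$ is an abelian group and $\varepsilon:G\times G\to\mathbb K\setminus\{0\}$ a skew-symmetric bicharacter: $\varepsilon(a,b)\varepsilon(b,a)=1$, $\varepsilon(a,b+c)=\varepsilon(a,b)\varepsilon(a,c)$, $\varepsilon(a+b,c)=\varepsilon(a,c)\varepsilon(b,c)$; $\mathbb K$ algebraically closed of characteristic zero, $A$ finite-dimensional and $G$-graded. For homogeneous $x\in A_a,y\in A_b$, $\varepsilon(x,y)$ means $\varepsilon(a,b)$, $\varepsilon(x,y+z)$ means $\varepsilon(a,b+c)$, etc. An $\varepsilon$-commutative associative algebra is a $G$-graded associative algebra $(A,\cdot)$ with $A_aA_b\subseteq A_{a+b}$ and $x\cdot y=\varepsilon(x,y)y\cdot x$. A Lie color algebra is a $G$-graded space with bilinear $[\,,\,]$, $[A_a,A_b]\subseteq A_{a+b}$, $[x,y]=-\varepsilon(x,y)[y,x]$, $\varepsilon(z,x)[x,[y,z]]+\varepsilon(y,z)[z,[x,y]]+\varepsilon(x,y)[y,[z,x]]=0$. An $F$-manifold color algebra is $(A,\cdot,[\,,\,],\varepsilon)$ with $(A,\cdot,\varepsilon)$ an $\varepsilon$-commutative associative algebra and $(A,[\,,\,],\varepsilon)$ a Lie color algebra such that $P_{x\cdot y}(z,w)=x\cdot P_y(z,w)+\varepsilon(x,y)y\cdot P_x(z,w)$ for all homogeneous $x,y,z,w$, where $P_x(y,z)=[x,y\cdot z]-[x,y]\cdot z-\varepsilon(x,y)y\cdot[x,z]$. A coherence $F$-manifold color algebra is an $F$-manifold color algebra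 satisfying the two identities in the claim. *)

From HB Require Import structures.
From mathcomp Require Import all_boot all_order all_algebra.
Set Implicit Arguments. Unset Strict Implicit. Unset Printing Implicit Defensive.
Import GRing.Theory.
Local Open Scope ring_scope.

Section Defs.
Variables (G : zmodType) (K : fieldType) (A : vectType K).

Definition skew_bichar (eps : G -> G -> K) : Prop :=
  [/\ forall a b, eps a b != 0,
      forall a b, eps a b * eps b a = 1,
      forall a b c, eps a (b + c) = eps a b * eps a c &
      forall a b c, eps (a + b) c = eps a c * eps b c].

(* A = (+)_{a in G} A_a : every element is a finite sum of homogeneous
   elements and the sum of the components is direct *)
Definition G_graded (Ag : G -> {vspace A}) : Prop :=
  (forall x : A, exists s : seq G, x \in (\sum_(a <- s) Ag a)%VS) /\
  (forall (s : seq G) (v : G -> A), uniq s -> (forall a, v a \in Ag a) ->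
      \sum_(a <- s) v a = 0 -> forall a, a \in s -> v a = 0).

Definition bilin (f : A -> A -> A) : Prop :=
  (forall x, linear (f x)) /\ (forall y, linear (fun x => f x y)).

Definition bilin_form (B : A -> A -> K) : Prop :=
  (forall (k : K) x y z, B (k *: x + y) z = k * B x z + B y z) /\
  (forall (k : K) x y z, B x (k *: y + z) = k * B x y + B x z).

Definition eps_comm_assoc (eps : G -> G -> K) (Ag : G -> {vspace A})
  (mul : A -> A -> A) : Prop :=
  [/\ bilin mul,
      forall a b x y, x \in Ag a -> y \in Ag b -> mul x y \in Ag (a + b),
      forall x y z, mul x (mul y z) = mul (mul x y) z &
      forall a b x y, x \in Ag a -> y \in Ag b -> mul x y = eps a b *: mul y x].

Definition lie_color (eps : G -> G -> K) (Ag : G -> {vspace A})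
  (br : A -> A -> A) : Prop :=
  [/\ bilin br,
      forall a b x y, x \in Ag a -> y \in Ag b -> br x y \in Ag (a + b),
      forall a b x y, x \in Ag a -> y \in Ag b -> br x y = - (eps a b *: br y x) &
      forall a b c x y z, x \in Ag a -> y \in Ag b -> z \in Ag c ->
        eps c a *: br x (br y z) + eps b c *: br z (br x y)
          + eps a b *: br y (br z x) = 0].

(* P_x(y,z) for x in A_a, y in A_b *)
Definition Pop (eps : G -> G -> K) (mul br : A -> A -> A) (a b : G) (x y z : A) : A :=
  br x (mul y z) - mul (br x y) z - eps a b *: mul y (br x z).

(* T(y,z)(w) for y in A_b, z in A_c *)
Definition Top (eps : G -> G -> K) (mul br : A -> A -> A) (b c : G) (y z w : A) : A :=
  - (eps b c *: br z (mul y w)) - br y (mul z w) + br (mul y z) w.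

Definition F_manifold_color (eps : G -> G -> K) (Ag : G -> {vspace A})
  (mul br : A -> A -> A) : Prop :=
  [/\ eps_comm_assoc eps Ag mul, lie_color eps Ag br &
      forall a b c d x y z w, x \in Ag a -> y \in Ag b -> z \in Ag c -> w \in Ag d ->
        Pop eps mul br (a + b) c (mul x y) z w =
          mul x (Pop eps mul br b c y z w) + eps a b *: mul y (Pop eps mul br a c x z w)].

Definition coherence_identities (eps : G -> G -> K) (Ag : G -> {vspace A})
  (mul br : A -> A -> A) : Prop :=
  (forall a b c d x y z w, x \in Ag a -> y \in Ag b -> z \in Ag c -> w \in Ag d ->
     Pop eps mul br (a + b) c (mul x y) z w =
       eps a (b + c) *: Pop eps mul br b c y z (mul x w)
       + eps b c *: Pop eps mul br a c x z (mul y w)) /\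
  (forall a b c d x y z w, x \in Ag a -> y \in Ag b -> z \in Ag c -> w \in Ag d ->
     mul (Pop eps mul br a b x y z) w =
       - (eps a (b + c) *: Top eps mul br b c y z (mul x w))
       + mul x (Top eps mul br b c y z w)).

Definition coherence_F_manifold_color (eps : G -> G -> K) (Ag : G -> {vspace A})
  (mul br : A -> A -> A) : Prop :=
  F_manifold_color eps Ag mul br /\ coherence_identities eps Ag mul br.

End Defs.

(** Pairing with the invariant form moves [P] and [T] to the other argument:
    [B(P_x(y,z), w) = eps(x,y) B(y, P_x(z,w))], and [B(T(y,z)(v), u)] is
    [B(v, P_u(y,z))] times a product of values of [eps].  As [B] is
    nondegenerate and [A] is spanned by homogeneous elements, each coherence
    identity, paired with a homogeneous [u], becomes the F-manifold identity for
    [P_(x y)] or [P_(x u)] plus an identity between products of values of [eps].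
    The second identity also needs a degree constraint: cycling a product
    through [B] shows that [B(y, x z)] vanishes unless [eps(z, y + x) = 1]. *)

From HB Require Import structures.
From mathcomp Require Import all_boot all_order all_algebra.
From mathcomp Require Import ring.
Set Implicit Arguments. Unset Strict Implicit. Unset Printing Implicit Defensive.
Import GRing.Theory.
Local Open Scope ring_scope.

Section LinearFun.
Variables (R : pzRingType) (U V : lmodType R) (f : U -> V).
Hypothesis f_lin : linear f.

Let fL : {linear U -> V} := HB.pack f (GRing.isLinear.Build R U V *:%R f f_lin).

Lemma linear_fun0 : f 0 = 0. Proof. exact: (raddf0 fL). Qed.
Lemma linear_funD u v : f (u + v) = f u + f v. Proof. exact: (raddfD fL). Qed.
Lemma linear_funN u : f (- u) = - f u. Proof. exact: (raddfN fL). Qed.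
Lemma linear_funB u v : f (u - v) = f u - f v. Proof. exact: (raddfB fL). Qed.
Lemma linear_funZ k u : f (k *: u) = k *: f u. Proof. exact: (linearZZ fL). Qed.

End LinearFun.

Section BilinearForm.
Variables (K : fieldType) (A : vectType K) (B : A -> A -> K).
Hypothesis B_bilin : bilin_form B.

Let B_linl z : linear (fun x => B x z : K^o).
Proof. by move=> k x y; case: B_bilin. Qed.

Let B_linr x : linear (B x : A -> K^o).
Proof. by move=> k y z; case: B_bilin. Qed.

Lemma formDl x y z : B (x + y) z = B x z + B y z.
Proof. exact: linear_funD (B_linl z) x y. Qed.
Lemma formNl x z : B (- x) z = - B x z.
Proof. exact: linear_funN (B_linl z) x. Qed.
Lemma formBl x y z : B (x - y) z = B x z - B y z.
Proof. exact: linear_funB (B_linl z) x y. Qed.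
Lemma formZl k x z : B (k *: x) z = k * B x z.
Proof. exact: linear_funZ (B_linl z) k x. Qed.
Lemma form0r x : B x 0 = 0.
Proof. exact: linear_fun0 (B_linr x). Qed.
Lemma formDr x y z : B x (y + z) = B x y + B x z.
Proof. exact: linear_funD (B_linr x) y z. Qed.
Lemma formNr x y : B x (- y) = - B x y.
Proof. exact: linear_funN (B_linr x) y. Qed.
Lemma formBr x y z : B x (y - z) = B x y - B x z.
Proof. exact: linear_funB (B_linr x) y z. Qed.
Lemma formZr k x y : B x (k *: y) = k * B x y.
Proof. exact: linear_funZ (B_linr x) k y. Qed.

End BilinearForm.

Section InvariantForm.
Variables (G : zmodType) (K : fieldType) (A : vectType K).
Variables (eps : G -> G -> K) (Ag : G -> {vspace A}) (mul br : A -> A -> A).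
Variable B : A -> A -> K.

Hypothesis eps_neq0 : forall a b, eps a b != 0.
Hypothesis eps_skew : forall a b, eps a b * eps b a = 1.
Hypothesis eps_addr : forall a b c, eps a (b + c) = eps a b * eps a c.
Hypothesis eps_addl : forall a b c, eps (a + b) c = eps a c * eps b c.
Hypothesis Ag_span : forall x : A, exists s : seq G, x \in (\sum_(a <- s) Ag a)%VS.

Hypothesis mul_linr : forall x, linear (mul x).
Hypothesis mul_graded : forall a b x y, x \in Ag a -> y \in Ag b ->
  mul x y \in Ag (a + b).
Hypothesis mul_eps_comm : forall a b x y, x \in Ag a -> y \in Ag b ->
  mul x y = eps a b *: mul y x.

Hypothesis br_linr : forall x, linear (br x).
Hypothesis br_graded : forall a b x y, x \in Ag a -> y \in Ag b ->
  br x y \in Ag (a + b).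
Hypothesis br_eps_skew : forall a b x y, x \in Ag a -> y \in Ag b ->
  br x y = - (eps a b *: br y x).

Notation P := (Pop eps mul br).
Notation T := (Top eps mul br).

Hypothesis Pop_mul : forall a b c d x y z w,
  x \in Ag a -> y \in Ag b -> z \in Ag c -> w \in Ag d ->
  P (a + b) c (mul x y) z w = mul x (P b c y z w) + eps a b *: mul y (P a c x z w).

Hypothesis B_bilin : bilin_form B.
Hypothesis formC : forall x y, B x y = B y x.
Hypothesis form_nondeg : forall x, (forall y, B x y = 0) -> x = 0.
Hypothesis form_mulA : forall a b c x y z, x \in Ag a -> y \in Ag b -> z \in Ag c ->
  B (mul x y) z = B x (mul y z).
Hypothesis form_brA : forall a b c x y z, x \in Ag a -> y \in Ag b -> z \in Ag c ->
  B (br x y) z = B x (br y z).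

Let mulrZ x k v : mul x (k *: v) = k *: mul x v.
Proof. exact: linear_funZ (mul_linr x) k v. Qed.
Let mulrN x v : mul x (- v) = - mul x v.
Proof. exact: linear_funN (mul_linr x) v. Qed.
Let brrZ x k v : br x (k *: v) = k *: br x v.
Proof. exact: linear_funZ (br_linr x) k v. Qed.

Let formDl := formDl B_bilin.
Let formNl := formNl B_bilin.
Let formBl := formBl B_bilin.
Let formZl := formZl B_bilin.
Let formDr := formDr B_bilin.
Let formNr := formNr B_bilin.
Let formBr := formBr B_bilin.
Let formZr := formZr B_bilin.

Lemma eps_swap a b : eps b a = (eps a b)^-1.
Proof. by apply: (mulfI (eps_neq0 a b)); rewrite eps_skew mulfV. Qed.

Lemma form_homog_inj X Y :
  (forall f u, u \in Ag f -> B X u = B Y u) -> X = Y.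
Proof.
move=> eqXY; apply/eqP; rewrite -subr_eq0; apply/eqP; apply: form_nondeg => u.
have [s] := Ag_span u; elim: s u => [|a s IHs] u.
  by rewrite big_nil memv0 => /eqP ->; rewrite (form0r B_bilin).
rewrite big_cons => /memv_addP [u1 u1a [u2 u2s ->]].
by rewrite formDr (IHs u2 u2s) formBl (eqXY _ _ u1a) subrr addr0.
Qed.

Lemma Pop_graded a b c x y z : x \in Ag a -> y \in Ag b -> z \in Ag c ->
  P a b x y z \in Ag (a + b + c).
Proof.
move=> xa yb zc; apply: rpredB; [apply: rpredB | apply: rpredZ].
- by rewrite -addrA; apply: br_graded xa (mul_graded yb zc).
- exact: mul_graded (br_graded xa yb) zc.
- by rewrite -addrA addrCA; apply: mul_graded yb (br_graded xa zc).
Qed.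

Lemma Top_graded b c d y z w : y \in Ag b -> z \in Ag c -> w \in Ag d ->
  T b c y z w \in Ag (b + c + d).
Proof.
move=> yb zc wd; apply: rpredD; [apply: rpredB; [rewrite rpredN; apply: rpredZ|] |].
- by rewrite -addrA addrCA; apply: br_graded zc (mul_graded yb wd).
- by rewrite -addrA; apply: br_graded yb (mul_graded zc wd).
- exact: br_graded (mul_graded yb zc) wd.
Qed.

Lemma Pop_swap a b c x y z : x \in Ag a -> y \in Ag b -> z \in Ag c ->
  P a b x y z = eps b c *: P a c x z y.
Proof.
move=> xa yb zc; apply: form_homog_inj => f u _.
rewrite /Pop (mul_eps_comm yb zc) brrZ (mul_eps_comm (br_graded xa yb) zc).
rewrite (mul_eps_comm yb (br_graded xa zc)).
rewrite !formBl !formZl !formBl !formZl eps_addl eps_addr (eps_swap a b).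
by field; rewrite !eps_neq0.
Qed.

Lemma form_Pop a b c d x y z w :
  x \in Ag a -> y \in Ag b -> z \in Ag c -> w \in Ag d ->
  B (P a b x y z) w = eps a b * B y (P a c x z w).
Proof.
move=> xa yb zc wd; have yzbc := mul_graded yb zc.
have e1 : B (br x (mul y z)) w = - (eps a (b + c) * B y (mul z (br x w))).
  by rewrite (br_eps_skew xa yzbc) formNl formZl (form_brA yzbc xa wd)
    (form_mulA yb zc (br_graded xa wd)).
have e2 : B (mul (br x y) z) w = - (eps a b * B y (br x (mul z w))).
  by rewrite (form_mulA (br_graded xa yb) zc wd) (br_eps_skew xa yb) formNl formZl
    (form_brA yb xa (mul_graded zc wd)).
have e3 : B (mul y (br x z)) w = B y (mul (br x z) w).
  exact: form_mulA yb (br_graded xa zc) wd.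
rewrite /Pop !formBl formZl e1 e2 e3 !formBr formZr eps_addr.
ring.
Qed.

Lemma form_mul_cycle a b c x y z : x \in Ag a -> y \in Ag b -> z \in Ag c ->
  eps c (b + a) * B y (mul x z) = B y (mul x z).
Proof.
move=> xa yb zc; rewrite eps_addr -mulrA.
rewrite -formZr -(mul_eps_comm zc xa) -(form_mulA yb zc xa) -formZl.
rewrite -(mul_eps_comm zc yb) (form_mulA zc yb xa) formC.
exact: form_mulA yb xa zc.
Qed.

Lemma form_Top b c f g y z v u :
  y \in Ag b -> z \in Ag c -> v \in Ag g -> u \in Ag f ->
  B (T b c y z v) u = eps (b + c) g * eps (b + c) f * B v (P f b u y z).
Proof.
move=> yb zc vg uf.
have yvbg := mul_graded yb vg; have zvcg := mul_graded zc vg.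
have yzbc := mul_graded yb zc.
have t1 : B (br z (mul y v)) u = - (eps c (b + g) * (eps b g * B v (mul y (br z u)))).
  by rewrite (br_eps_skew zc yvbg) formNl formZl (form_brA yvbg zc uf)
    (mul_eps_comm yb vg) formZl (form_mulA vg yb (br_graded zc uf)).
have t2 : B (br y (mul z v)) u = - (eps b (c + g) * (eps c g * B v (mul z (br y u)))).
  by rewrite (br_eps_skew yb zvcg) formNl formZl (form_brA zvcg yb uf)
    (mul_eps_comm zc vg) formZl (form_mulA vg zc (br_graded yb uf)).
have t3 : B (br (mul y z) v) u = - (eps (b + c) g * B v (br (mul y z) u)).
  by rewrite (br_eps_skew yzbc vg) formNl formZl (form_brA vg yzbc uf).
have r1 : B v (br u (mul y z)) = - (eps f (b + c) * B v (br (mul y z) u)).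
  by rewrite (br_eps_skew uf yzbc) formNr formZr.
have r2 : B v (mul (br u y) z) = eps (f + b) c * (- (eps f b * B v (mul z (br y u)))).
  by rewrite (mul_eps_comm (br_graded uf yb) zc) formZr (br_eps_skew uf yb) mulrN mulrZ
    formNr formZr.
have r3 : B v (mul y (br u z)) = - (eps f c * B v (mul y (br z u))).
  by rewrite (br_eps_skew uf zc) mulrN mulrZ formNr formZr.
rewrite /Top /Pop formDl !formBl formNl formZl t1 t2 t3 !formBr formZr r1 r2 r3.
rewrite !eps_addl !eps_addr (eps_swap b c) (eps_swap b f) (eps_swap c f).
by field; rewrite !eps_neq0.
Qed.

Lemma Pop_mul_coherence a b c d x y z w :
  x \in Ag a -> y \in Ag b -> z \in Ag c -> w \in Ag d ->
  P (a + b) c (mul x y) z w =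
    eps a (b + c) *: P b c y z (mul x w) + eps b c *: P a c x z (mul y w).
Proof.
move=> xa yb zc wd; apply: form_homog_inj => f u uf.
have xyab := mul_graded xa yb; have xwad := mul_graded xa wd.
have ywbd := mul_graded yb wd.
rewrite (Pop_swap xyab zc wd) formZl (form_Pop xyab wd zc uf)
  (Pop_mul xa yb zc uf) formDr formZr.
rewrite formDl !formZl (Pop_swap yb zc xwad) formZl (form_Pop yb xwad zc uf)
  (mul_eps_comm xa wd) formZl (form_mulA wd xa (Pop_graded yb zc uf)).
rewrite (Pop_swap xa zc ywbd) formZl (form_Pop xa ywbd zc uf)
  (mul_eps_comm yb wd) formZl (form_mulA wd yb (Pop_graded xa zc uf)).
rewrite !eps_addl !eps_addr (eps_swap a b) (eps_swap a c) (eps_swap b c).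
by field; rewrite !eps_neq0.
Qed.

Lemma mul_Pop_coherence a b c d x y z w :
  x \in Ag a -> y \in Ag b -> z \in Ag c -> w \in Ag d ->
  mul (P a b x y z) w =
    - (eps a (b + c) *: T b c y z (mul x w)) + mul x (T b c y z w).
Proof.
move=> xa yb zc wd; apply: form_homog_inj => f u uf.
have Pxyz := Pop_graded xa yb zc; have Tyzw := Top_graded yb zc wd.
rewrite (form_mulA Pxyz wd uf) formC (form_mulA wd uf Pxyz).
rewrite -(form_mul_cycle uf wd Pxyz).
rewrite formDl formNl formZl (form_Top yb zc (mul_graded xa wd) uf)
  (mul_eps_comm xa wd) formZl (form_mulA wd xa (Pop_graded uf yb zc)).
rewrite (mul_eps_comm xa Tyzw) formZl (form_mulA Tyzw xa uf)
  (form_Top yb zc wd (mul_graded xa uf)) (Pop_mul xa uf yb zc) formDr formZr.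
rewrite !eps_addl !eps_addr ?(eps_swap a b) ?(eps_swap a c) ?(eps_swap a d) ?(eps_swap a f).
by field; rewrite !eps_neq0.
Qed.

Lemma invariant_form_coherence : coherence_identities eps Ag mul br.
Proof.
split=> a b c d x y z w xa yb zc wd.
  exact: Pop_mul_coherence xa yb zc wd.
exact: mul_Pop_coherence xa yb zc wd.
Qed.

End InvariantForm.

Theorem proposition3p8 (G : zmodType) (K : closedFieldType)
  (hK : [pchar K] =i pred0) (A : vectType K)
  (eps : G -> G -> K) (Ag : G -> {vspace A}) (mul br : A -> A -> A)
  (B : A -> A -> K) :
  skew_bichar eps -> G_graded Ag ->
  F_manifold_color eps Ag mul br ->
  bilin_form B ->
  (forall x y, B x y = B y x) ->
  (forall x, (forall y, B x y = 0) -> x = 0) ->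
  (forall a b c x y z, x \in Ag a -> y \in Ag b -> z \in Ag c ->
     B (mul x y) z = B x (mul y z)) ->
  (forall a b c x y z, x \in Ag a -> y \in Ag b -> z \in Ag c ->
     B (br x y) z = B x (br y z)) ->
  coherence_F_manifold_color eps Ag mul br.
Proof.
move=> [eps_neq0 eps_skew eps_addr eps_addl] [Ag_span _] FM B_bilin formC
  form_nondeg form_mulA form_brA.
split=> //; case: FM => [[[mul_linr _] mul_graded _ mul_eps_comm]
  [[br_linr _] br_graded br_eps_skew _] Pop_mul].
exact: invariant_form_coherence eps_neq0 eps_skew eps_addr eps_addl Ag_span
  mul_linr mul_graded mul_eps_comm br_linr br_graded br_eps_skew Pop_mul
  B_bilin formC form_nondeg form_mulA form_brA.
Qed.
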